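(* Let $M$ be a matroid on $E$ whose dual is transversal with maximal presentation $\mathcal A=(A_1,\ldots,A_r)$, $r=r^*(M)$; let $e\in E$, ordered so that for some $k\in[r]$, $e\in A_i$ iff $i\le k$. Let $G$ be a minimal $(e,\mathcal A)$-presenting graph on vertex set $[k]$ for which the identity map is the presenting map. If $G$ is a tree with edge set $\{\{i_1,j_1\},\ldots,\{i_{k-1},j_{k-1}\}\}$, then $$(\mathrm{cl}_{M\backslash e}(A_{i_1}\cup A_{j_1}-e),\ldots,\mathrm{cl}_{M\backslash e}(A_{i_{k-1}}\cup A_{j_{k-1}}-e),A_{k+1},\ldots,A_r)$$ is a presentation of $(M\backslash e)^*$.
   Context: $M^*=M[\mathcal A]$, the transversal matroid whose independent sets are the partial transversals of $\mathcal A$; the presentation is maximal if every $A_i$ is a cyclic flat of $M$ (a flat that is a union of circuits). For $X\subseteq E$: $\mathcal A(X)=\{i:A_i\subseteq X\}$, $\mathcal A_e(X)=\{i\in\mathcal A(X): e\in A_i\}$, and $G[U]$ is the induced subgraph on $U$. A graph with vertex set $\mathcal A_e(E)=[k]$ is $(e,\mathcal A)$-presenting if for all distinct $i,j$ the graph $G[\mathcal A_e(\mathrm{cl}_M(A_i\cup A_j))]$ is connected; minimal if deleting any one edge destroys this property. *)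

From mathcomp Require Import all_boot all_order.
Set Implicit Arguments. Unset Strict Implicit. Unset Printing Implicit Defensive.

Section Matroids.
Variable T : finType.

Record mat := Mat { ground : {set T}; indep : {set T} -> bool }.

Definition is_matroid (M : mat) : Prop :=
  [/\ indep M set0,
      (forall I : {set T}, indep M I -> I \subset ground M),
      (forall I J : {set T}, J \subset I -> indep M I -> indep M J) &
      (forall I J : {set T}, indep M I -> indep M J -> #|I| < #|J| ->
         exists2 x, x \in J :\: I & indep M (x |: I))].

Definition rank (M : mat) (X : {set T}) : nat :=
  \max_(I : {set T} | (I \subset X) && indep M I) #|I|.

Definition is_basis (M : mat) (B : {set T}) : bool :=
  indep M B && [forall J : {set T}, (indep M J && (B \subset J)) ==> (J == B)].

Definition dual (M : mat) : mat :=
  Mat (ground M)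
      (fun X => (X \subset ground M) &&
                [exists B : {set T}, is_basis M B && [disjoint X & B]]).

Definition delete (M : mat) (e : T) : mat :=
  Mat (ground M :\ e) (fun X => indep M X && (e \notin X)).

Definition cl (M : mat) (X : {set T}) : {set T} :=
  [set x in ground M | rank M (x |: X) == rank M X].

Definition is_flat (M : mat) (X : {set T}) : bool :=
  (X \subset ground M) && (cl M X == X).

Definition is_circuit (M : mat) (C : {set T}) : bool :=
  [&& C \subset ground M, ~~ indep M C &
      [forall x in C, indep M (C :\ x)]].

Definition is_cyclic_flat (M : mat) (X : {set T}) : bool :=
  is_flat M X &&
  [forall x in X, exists C : {set T}, [&& is_circuit M C, x \in C & C \subset X]].

Definition partial_transversal (I : Type) (A : I -> {set T}) (X : {set T}) : Prop :=
  exists f : T -> option I,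
    {in X &, injective f} /\
    (forall x, x \in X -> exists2 i, f x = Some i & x \in A i).

Definition is_presentation (N : mat) (I : Type) (A : I -> {set T}) : Prop :=
  (forall i, A i \subset ground N) /\
  (forall X : {set T}, X \subset ground N -> (indep N X <-> partial_transversal A X)).

End Matroids.

Section Graphs.
Variable k : nat.

Definition simple_graph (G : {set {set 'I_k}}) : Prop :=
  forall ed : {set 'I_k}, ed \in G -> #|ed| = 2.

Definition adj (G : {set {set 'I_k}}) : rel 'I_k := fun x y => [set x; y] \in G.

Definition induced_connected (G : {set {set 'I_k}}) (U : {set 'I_k}) : Prop :=
  forall u v, u \in U -> v \in U ->
    connect [rel x y | [&& adj G x y, x \in U & y \in U]] u v.

Definition has_cycle (G : {set {set 'I_k}}) : Prop :=
  exists s : seq 'I_k, [/\ uniq s, 3 <= size s & cycle (adj G) s].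

Definition is_tree (G : {set {set 'I_k}}) : Prop :=
  induced_connected G setT /\ ~ has_cycle G.

End Graphs.

Section Presenting.
Variables (T : finType) (M : mat T) (r k : nat) (hkr : k <= r) (A : 'I_r -> {set T}) (e : T).

(* A_e(X) = { i : A_i \subseteq X, e \in A_i }, as vertices of G (identity presenting map) *)
Definition Ae (X : {set T}) : {set 'I_k} :=
  [set i : 'I_k | (A (widen_ord hkr i) \subset X) && (e \in A (widen_ord hkr i))].

Definition presenting (G : {set {set 'I_k}}) : Prop :=
  forall i j : 'I_k, i != j ->
    induced_connected G (Ae (cl M (A (widen_ord hkr i) :|: A (widen_ord hkr j)))).

Definition minimal_presenting (G : {set {set 'I_k}}) : Prop :=
  presenting G /\ forall ed : {set 'I_k}, ed \in G -> ~ presenting (G :\ ed).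

Definition new_family (G : {set {set 'I_k}})
  (t : ({ed : {set 'I_k} | ed \in G} + {i : 'I_r | k <= i})%type) : {set T} :=
  match t with
  | inl ed => cl (delete M e) ((\bigcup_(i in val ed) A (widen_ord hkr i)) :\ e)
  | inr i => A (val i)
  end.

End Presenting.

(* Some basis of M avoids e ({e} is matched into A), so X, a subset of E - e,
   is coindependent in M \ e iff e + X is coindependent in M, i.e. matchable
   into A.  Given such a matching, with e matched to A_i0, root the tree G at i0
   and send every other head index i <= k to the edge joining i to its parent;
   this turns the matching of X into one into the new family.  Conversely, if
   e + X is not matchable into A, Hall's theorem gives a minimal non-matchable
   C inside it; C is a cocircuit of M, so closures of sets avoiding C avoid C.
   Counting neighbourhoods then yields Hall's inequality for C, a contradiction:
   if e is in C, all k head sets meet C while there are only k - 1 edges;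
   otherwise the head indices i with A_i disjoint from C form a connected
   subtree U of G (G is presenting), and only the at most k - |U| edges leaving
   U give new sets that can meet C. *)

From mathcomp Require Import all_boot all_order zify.
Set Implicit Arguments. Unset Strict Implicit. Unset Printing Implicit Defensive.

Section SetFacts.
Variable T : finType.
Implicit Types A B : {set T}.

Lemma disjointP A B : reflect (forall x, x \in A -> x \notin B) [disjoint A & B].
Proof.
by rewrite disjoints_subset; apply: (iffP subsetP) => h x /h; rewrite inE.
Qed.

Lemma disjointPn A B : reflect (exists2 x, x \in A & x \in B) (~~ [disjoint A & B]).
Proof.
rewrite -setI_eq0; apply: (iffP (set0Pn _)) => [[x /setIP [xA xB]]|[x xA xB]].
  by exists x.
by exists x; rewrite inE xA.
Qed.

Lemma cardsC_setU1 A x : x \notin A -> #|~: (x |: A)|.+1 = #|~: A|.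
Proof. by move=> xA; move: (cardsC (x |: A)) (cardsC A); rewrite cardsU1 xA; lia. Qed.

End SetFacts.

Section Matroid.
Variables (T : finType) (M : mat T).
Implicit Types I J B C S X Y : {set T}.

Lemma mem_cl S x : x \in S -> x \in ground M -> x \in cl M S.
Proof.
move=> xS xE; have xSS : x |: S = S by apply/setUidPr; rewrite sub1set.
by rewrite inE xE xSS eqxx.
Qed.

Hypothesis hM : is_matroid M.

Lemma indep0 : indep M set0.
Proof. by case: hM. Qed.

Lemma indepS I J : J \subset I -> indep M I -> indep M J.
Proof. by case: hM => _ _ h _; apply: h. Qed.

Lemma indep_augment I J : indep M I -> indep M J -> #|I| < #|J| ->
  exists2 x, x \in J :\: I & indep M (x |: I).
Proof. by case: hM => _ _ _ h; apply: h. Qed.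

Lemma indep_card_le_rank I Y : indep M I -> I \subset Y -> #|I| <= rank M Y.
Proof. by move=> iI sIY; apply: leq_bigmax_cond; rewrite sIY. Qed.

Lemma rank_witness Y : exists2 I : {set T}, (I \subset Y) && indep M I & #|I| = rank M Y.
Proof.
have h0 : 0 < #|[pred I : {set T} | (I \subset Y) && indep M I]|.
  by apply/card_gt0P; exists set0; rewrite inE sub0set indep0.
by have [I] := eq_bigmax_cond (fun I => #|I|) h0; exists I.
Qed.

Lemma indep_extend I Y : indep M I -> I \subset Y ->
  exists J : {set T}, [/\ I \subset J, J \subset Y, indep M J & #|J| = rank M Y].
Proof.
have [n] := ubnP (rank M Y - #|I|); elim: n I => // n IHn I ltn iI sIY.
have [K /andP [sKY iK] cK] := rank_witness Y.
case: (ltnP #|I| #|K|) => [ltIK | leKI]; last first.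
  by exists I; split=> //; apply/eqP; rewrite eqn_leq indep_card_le_rank //= -cK.
have [x /setDP [xK xI] ixI] := indep_augment iI iK ltIK.
have [||J [sxJ sJY iJ cJ]] := IHn (x |: I) _ ixI.
- by move: ltn ltIK; rewrite cardsU1 xI -cK; lia.
- by rewrite subUset sub1set (subsetP sKY).
by exists J; split=> //; apply: subset_trans sxJ; apply: subsetUr.
Qed.

Lemma basis_card_max B J : is_basis M B -> indep M J -> #|J| <= #|B|.
Proof.
move=> /andP [iB /forallP maxB] iJ; rewrite leqNgt; apply/negP => ltBJ.
have [x /setDP [_ xB] ixB] := indep_augment iB iJ ltBJ.
move/implyP: (maxB (x |: B)); rewrite ixB subsetUr => /(_ isT) /eqP exB.
by move: xB; rewrite -exB setU11.
Qed.

Lemma basis_of_card B J : is_basis M B -> indep M J -> #|B| <= #|J| -> is_basis M J.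
Proof.
move=> bB iJ leBJ; rewrite /is_basis iJ; apply/forallP => J'.
apply/implyP => /andP [iJ' sJJ']; rewrite eq_sym eqEcard sJJ'.
exact: leq_trans (basis_card_max bB iJ') leBJ.
Qed.

(* The hypotheses say that [C] is a cocircuit; its complement is then a
   hyperplane, hence a flat. *)
Lemma cl_disjoint_cocircuit C S :
  (forall x, x \in C -> exists2 B, is_basis M B & [disjoint C :\ x & B]) ->
  (forall B, is_basis M B -> ~~ [disjoint C & B]) ->
  [disjoint S & C] -> [disjoint cl M S & C].
Proof.
move=> avoidB meetB dSC; apply/disjointP => x; rewrite inE => /andP [_ /eqP rkx].
apply/negP => xC; have [B bB dCxB] := avoidB x xC.
have [I /andP [sIS iI] rkI] := rank_witness S.
have [J [sIJ sJIB iJ rkJ]] := indep_extend iI (subsetUl I B).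
have bJ : is_basis M J.
  have iB : indep M B by case/andP: bB.
  by apply: basis_of_card bB iJ _; rewrite rkJ indep_card_le_rank ?subsetUr.
have [c cC cJ] := disjointPn _ _ (meetB J bJ).
have notinI y : y \in C -> y \notin I.
  by move=> yC; apply: contraL yC => /(subsetP sIS); apply: (disjointP _ _ dSC).
have cx : c = x.
  move: (subsetP sJIB c cJ); rewrite inE (negbTE (notinI c cC)) /= => cB.
  by apply/eqP; apply: contraLR cB => cx; apply: (disjointP _ _ dCxB); rewrite !inE cx.
subst c.
have : #|x |: I| <= rank M (x |: S).
  by rewrite indep_card_le_rank ?setUS // (indepS _ iJ) // subUset sub1set cJ.
by rewrite cardsU1 notinI // rkI rkx ltnn.
Qed.

End Matroid.

Section Deletion.
Variables (T : finType) (M : mat T) (e : T).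
Implicit Types B S X Y : {set T}.

Lemma rank_delete Y : e \notin Y -> rank (delete M e) Y = rank M Y.
Proof.
move=> eY; apply: eq_bigl => I /=; case sIY: (I \subset Y) => //=.
by case: (indep M I) => //=; apply: contra eY => /(subsetP sIY).
Qed.

Lemma cl_delete S : e \notin S -> cl (delete M e) S = cl M S :\ e.
Proof.
move=> eS; apply/setP => x; rewrite !inE; case: (eqVneq x e) => //= xe.
by rewrite !rank_delete // in_setU1 negb_or eq_sym xe.
Qed.

Hypothesis hM : is_matroid M.

Lemma delete_matroid : is_matroid (delete M e).
Proof.
case: hM => h0 h1 h2 h3; split => /=.
- by rewrite h0 inE.
- by move=> I /andP [iI eI]; rewrite subsetD1 eI h1.
- move=> I J sJI /andP [iI eI]; rewrite (h2 I J) //=.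
  by apply: contra eI; apply: (subsetP sJI).
- move=> I J /andP [iI eI] /andP [iJ eJ] /(h3 I J iI iJ) [x xJI ixI].
  exists x => //; rewrite ixI in_setU1 negb_or eI andbT.
  by apply: contraNneq eJ => ->; case/setDP: xJI.
Qed.

Hypothesis (hcoloop : exists2 B0, is_basis M B0 & e \notin B0).

Lemma is_basis_delete B : is_basis (delete M e) B = is_basis M B && (e \notin B).
Proof.
have [B0 bB0 eB0] := hcoloop.
apply/idP/andP => [bB | [/andP [iB /forallP maxB] eB]].
  have /andP [/andP [iB eB] _] := bB; split=> //.
  apply: (basis_of_card hM bB0 iB); apply: (basis_card_max delete_matroid bB).
  by rewrite /= eB0 andbT; case/andP: bB0.
rewrite /is_basis /= iB eB; apply/forallP => J; apply/implyP => /andP [/andP [iJ _] sBJ].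
by have /implyP := maxB J; apply; rewrite iJ.
Qed.

Lemma dual_delete X : e \in ground M -> X \subset ground M :\ e ->
  indep (dual (delete M e)) X = indep (dual M) (e |: X).
Proof.
move=> eE sX; rewrite /dual /= sX subUset sub1set eE (subset_trans sX) ?subsetDl //=.
apply: eq_existsb => B.
by rewrite is_basis_delete !disjoints_subset subUset sub1set inE andbA.
Qed.

End Deletion.

Section Hall.
Variables (I T : finType) (A : I -> {set T}).
Implicit Types (J K L : {set I}) (C X Y Z W : {set T}).

Definition nbhd J Z := [set i in J | ~~ [disjoint A i & Z]].

Definition partial_transversal_in J Y := exists f : T -> option I,
  {in Y &, injective f} /\
  forall y, y \in Y -> exists2 i, f y = Some i & (i \in J) && (y \in A i).

Definition hall_cond J Y :=
  [forall Z : {set T}, (Z \subset Y) ==> (#|Z| <= #|nbhd J Z|)].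

Lemma partial_transversal_inT Y :
  partial_transversal A Y <-> partial_transversal_in setT Y.
Proof.
split=> -[f [finj hf]]; exists f; split=> // y /hf [i fy yA]; exists i => //.
  by rewrite inE.
by case/andP: yA.
Qed.

Lemma nbhd_sub J Z : nbhd J Z \subset J.
Proof. by apply/subsetP => i; rewrite inE => /andP []. Qed.

Lemma nbhdS J Z Z' : Z \subset Z' -> nbhd J Z \subset nbhd J Z'.
Proof.
move=> sZ; apply/subsetP => i; rewrite !inE => /andP [-> /=].
by apply: contra; apply: disjointWr.
Qed.

Lemma mem_nbhd J Z i x : i \in J -> x \in A i -> x \in Z -> i \in nbhd J Z.
Proof. by move=> iJ xA xZ; rewrite inE iJ; apply/disjointPn; exists x. Qed.

Lemma hall_necessary J Y Z :
  partial_transversal_in J Y -> Z \subset Y -> #|Z| <= #|nbhd J Z|.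
Proof.
move=> [f [finj hf]] sZY.
have finjZ : {in Z &, injective f}.
  by move=> x y /(subsetP sZY) xY /(subsetP sZY); apply: finj.
rewrite -(card_in_imset finjZ) -(card_imset (nbhd J Z) (@Some_inj _)).
apply/subset_leq_card/subsetP => _ /imsetP [z zZ ->].
have [i -> /andP [iJ zA]] := hf z (subsetP sZY z zZ).
by rewrite imset_f // (mem_nbhd iJ zA).
Qed.

Lemma partial_transversal_in0 J : partial_transversal_in J set0.
Proof. by exists (fun=> None); split=> [x y|y]; rewrite inE. Qed.

Lemma partial_transversal_in1 i y : y \in A i -> partial_transversal_in [set i] [set y].
Proof.
move=> yA; exists (fun=> Some i); split=> [x z /set1P -> /set1P -> //|z /set1P ->].
by exists i; rewrite ?set11.
Qed.

Lemma partial_transversal_inS J J' Y : J \subset J' ->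
  partial_transversal_in J Y -> partial_transversal_in J' Y.
Proof.
move=> sJ [f [finj hf]]; exists f; split=> // y /hf [i fy /andP [iJ yA]].
by exists i; rewrite // (subsetP sJ) ?yA.
Qed.

Lemma partial_transversal_in_nbhd J Z :
  partial_transversal_in J Z -> partial_transversal_in (nbhd J Z) Z.
Proof.
move=> [f [finj hf]]; exists f; split=> // z zZ.
by have [i fz /andP [iJ zA]] := hf z zZ; exists i; rewrite // (mem_nbhd iJ zA).
Qed.

Lemma partial_transversal_in_glue K L Y Z : [disjoint K & L] -> Z \subset Y ->
  partial_transversal_in K Z -> partial_transversal_in L (Y :\: Z) ->
  partial_transversal_in (K :|: L) Y.
Proof.
move=> dKL sZY [f1 [inj1 hf1]] [f2 [inj2 hf2]].
have sep x y : x \in Z -> y \in Y :\: Z -> f1 x != f2 y.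
  move=> /hf1 [i -> /andP [iK _]] /hf2 [j -> /andP [jL _]].
  by apply/eqP => -[ij]; move: (disjointP _ _ dKL i iK); rewrite ij jL.
exists (fun y => if y \in Z then f1 y else f2 y); split.
  move=> x y xY yY /=; case: ifPn => xZ; case: ifPn => yZ.
  - exact: inj1.
  - by move/eqP; rewrite (negbTE (sep _ _ xZ _)) // inE yZ.
  - by move/esym/eqP; rewrite (negbTE (sep _ _ yZ _)) // inE xZ.
  - by apply: inj2; rewrite inE ?xZ ?yZ.
move=> y yY; case: ifPn => yZ.
  by have [i -> /andP [iK yA]] := hf1 y yZ; exists i; rewrite // inE iK.
have [|i -> /andP [iL yA]] := hf2 y; first by rewrite inE yZ.
by exists i; rewrite // inE iL orbT.
Qed.

Lemma hall_condS J Y Z : Z \subset Y -> hall_cond J Y -> hall_cond J Z.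
Proof.
move=> sZY /forallP hY; apply/forallP => W; apply/implyP => sWZ.
exact: implyP (hY W) (subset_trans sWZ sZY).
Qed.

Lemma hall_cond_tight J Y Z : hall_cond J Y -> Z \subset Y ->
  #|nbhd J Z| <= #|Z| -> hall_cond (J :\: nbhd J Z) (Y :\: Z).
Proof.
move=> /forallP hY sZY tight; apply/forallP => W; apply/implyP => sW.
have dWZ : [disjoint W & Z] by rewrite disjoints_subset (subset_trans sW) // setDE subsetIr.
have := implyP (hY (W :|: Z)).
rewrite subUset sZY (subset_trans sW (subsetDl _ _)) cardsU (disjoint_setI0 dWZ).
rewrite cards0 subn0 => /(_ isT) hWZ.
have : nbhd J (W :|: Z) \subset nbhd J Z :|: nbhd (J :\: nbhd J Z) W.
  apply/subsetP => i; rewrite !inE !disjoints_subset setCU subsetI.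
  by case: (i \in J); case: (A i \subset ~: W); case: (A i \subset ~: Z).
move/subset_leq_card/leq_trans/(_ (leq_card_setU _ _)).
by move: hWZ tight; lia.
Qed.

Lemma hall_cond_slack J Y y i :
  (forall Z, Z != set0 -> Z \proper Y -> #|Z| < #|nbhd J Z|) -> y \in Y ->
  hall_cond (J :\ i) (Y :\ y).
Proof.
move=> slack yY; apply/forallP => Z; apply/implyP => sZ.
have [-> | nZ] := eqVneq Z set0; first by rewrite cards0.
have := slack Z nZ (sub_proper_trans sZ (properD1 yY)).
have : nbhd J Z \subset i |: nbhd (J :\ i) Z.
  by apply/subsetP => j; rewrite !inE; case: eqP.
move/subset_leq_card; rewrite cardsU1.
by case: (i \in nbhd (J :\ i) Z) => /=; lia.
Qed.

Theorem hallP J Y : reflect (partial_transversal_in J Y) (hall_cond J Y).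
Proof.
apply: (iffP idP) => [|ptY]; last first.
  by apply/forallP => Z; apply/implyP; apply: hall_necessary.
have [n] := ubnP #|Y|; elim: n J Y => // n IHn J Y ltY hY.
have [/existsP [Z /and3P [nZ pZY tight]] | /existsPn slack] :=
  boolP [exists Z : {set T}, [&& Z != set0, Z \proper Y & #|nbhd J Z| <= #|Z|]].
  have sZY := proper_sub pZY.
  have ptZ : partial_transversal_in J Z.
    by apply: IHn (hall_condS sZY hY); move: (proper_card pZY) ltY; lia.
  have ptYZ : partial_transversal_in (J :\: nbhd J Z) (Y :\: Z).
    apply: IHn (hall_cond_tight hY sZY tight).
    move: (cardsID Z Y) ltY; rewrite (setIidPr sZY).
    by move: nZ; rewrite -card_gt0; lia.
  apply: partial_transversal_inS (partial_transversal_in_glue _ sZY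
    (partial_transversal_in_nbhd ptZ) ptYZ); first by rewrite subUset nbhd_sub subsetDl.
  by apply/disjointP => i iN; rewrite inE iN.
have [-> | /set0Pn [y yY]] := eqVneq Y set0; first exact: partial_transversal_in0.
have := implyP (forallP hY [set y]); rewrite sub1set yY cards1 card_gt0.
move=> /(_ isT) /set0Pn [i]; rewrite inE => /andP [iJ /disjointPn [x xA /set1P xy]].
rewrite {x}xy in xA.
have ptYy : partial_transversal_in (J :\ i) (Y :\ y).
  apply: IHn (hall_cond_slack _ _ yY); first by move: ltY; rewrite (cardsD1 y Y) yY; lia.
  by move=> Z nZ pZ; move: (slack Z); rewrite nZ pZ ltnNge.
apply: partial_transversal_inS (partial_transversal_in_glue _ _
  (partial_transversal_in1 xA) ptYy); rewrite ?setD1K ?sub1set //.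
by rewrite disjoints1 !inE eqxx.
Qed.

Lemma minimal_hall_violator J Y : ~~ hall_cond J Y ->
  exists2 C : {set T}, C \subset Y & [/\ #|nbhd J C| < #|C|, ~ partial_transversal_in J C &
    forall x, x \in C -> partial_transversal_in J (C :\ x)].
Proof.
move=> nY; have [C /minsetP [nC minC] sCY] :=
  minset_exists (P := [pred Z | ~~ hall_cond J Z]) nY.
have hallS Z : Z \proper C -> hall_cond J Z.
  move=> pZC; apply: contraT => nZ.
  by move: (pZC); rewrite (minC Z nZ (proper_sub pZC)) properxx.
exists C => //; split.
- move: nC => /forallPn [Z]; rewrite negb_imply -ltnNge => /andP [sZC ltZ].
  have [eZC | nZC] := eqVneq Z C; first by rewrite -eZC.
  have := hallS Z; rewrite properEneq nZC sZC => /(_ isT) /forallP /(_ Z).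
  by rewrite subxx leqNgt ltZ.
- by move/hallP; apply/negP.
- by move=> x xC; apply/hallP/hallS/properD1.
Qed.

Lemma partial_transversal_in_setU1 J x X : x \notin X ->
  partial_transversal_in J (x |: X) ->
  exists2 i, x \in A i & partial_transversal_in (J :\ i) X.
Proof.
move=> xX [f [finj hf]]; have [i fx /andP [_ xA]] := hf x (setU11 x X).
exists i => //; exists f; split.
  by move=> y z yX zX; apply: finj; rewrite inE ?yX ?zX orbT.
move=> y yX; have [j fy /andP [jJ yA]] := hf y (setU1r x yX).
exists j; rewrite // !inE jJ yA !andbT; apply: contraNneq xX => ji.
by rewrite -(finj y x) ?(setU1r x yX) ?setU11 // fy fx ji.
Qed.

Lemma partial_transversal_in_relabel (I' : Type) (A' : I' -> {set T}) J
    (g : I -> option I') X :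
  {in J &, injective g} ->
  (forall i, i \in J -> exists2 t, g i = Some t & X :&: A i \subset A' t) ->
  partial_transversal_in J X -> partial_transversal A' X.
Proof.
move=> ginj hg [f [finj hf]]; exists (fun x => obind g (f x)); split.
  move=> x y xX yX /=.
  have [i fx /andP [iJ _]] := hf x xX; have [j fy /andP [jJ _]] := hf y yX.
  by rewrite fx fy /= => gij; apply: finj; rewrite // fx fy (ginj i j iJ jJ gij).
move=> x xX; have [i fx /andP [iJ xA]] := hf x xX; have [t gi sA] := hg i iJ.
by exists t; rewrite ?fx /= ?gi // (subsetP sA) // inE xX.
Qed.

End Hall.

Section Tree.
Variables (k : nat) (G : {set {set 'I_k}}).
Implicit Types (U : {set 'I_k}) (psi : 'I_k -> {set 'I_k}).

Definition induced_adj U := [rel x y | [&& adj G x y, x \in U & y \in U]].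

Definition edges_out U := [set ed in G | ~~ (ed \subset U)].

Lemma adjC x y : adj G x y = adj G y x.
Proof. by rewrite /adj setUC. Qed.

Lemma mem_induced_path U x p y : path (induced_adj U) x p -> y \in p -> y \in U.
Proof.
elim: p x => [|z p IHp] x //= /andP [/and3P [_ _ zU] pth].
by rewrite inE => /orP [/eqP -> | /(IHp z pth)].
Qed.

Lemma induced_connected_setU1 U a b : a \in U -> adj G a b ->
  induced_connected G U -> induced_connected G (b |: U).
Proof.
move=> aU ab hU.
have liftU x y : x \in U -> y \in U -> connect (induced_adj (b |: U)) x y.
  move=> xU yU; apply: connect_sub (hU x y xU yU) => p q /and3P [pq pU qU].
  by apply: connect1; rewrite /= pq !inE pU qU !orbT.
have ba : connect (induced_adj (b |: U)) b a.
  by apply: connect1; rewrite /= adjC ab !inE eqxx aU orbT.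
have ab' : connect (induced_adj (b |: U)) a b.
  by apply: connect1; rewrite /= ab !inE eqxx aU orbT.
move=> u v; rewrite !inE => /orP [/eqP -> | uU] /orP [/eqP -> | vU].
- exact: connect0.
- exact: connect_trans ba (liftU _ _ aU vU).
- exact: connect_trans (liftU _ _ uU aU) ab'.
- exact: liftU.
Qed.

Hypothesis hconn : induced_connected G setT.

Lemma exists_edge_out U u w : u \in U -> w \notin U ->
  exists a b, [/\ a \in U, b \notin U & adj G a b].
Proof.
move=> uU; have /connectP [p pth ->] := hconn (in_setT u) (in_setT w).
elim: p u uU pth => [|z p IHp] u uU /=; first by rewrite uU.
move=> /andP [/and3P [uz _ _] pth] lU; case zU: (z \in U); first exact: IHp zU pth lU.
by exists u, z; rewrite zU.
Qed.

(* [psi v] is the edge from [v] towards the root [i0] in a spanning tree of [G[U]]. *)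
Definition parent_edges i0 U psi :=
  {in U :\ i0 &, injective psi} /\
  forall v, v \in U :\ i0 -> [&& v \in psi v, psi v \in G & psi v \subset U].

Lemma parent_edges_setU1 i0 U psi a b : i0 \in U -> a \in U -> b \notin U ->
  adj G a b -> parent_edges i0 U psi ->
  parent_edges i0 (b |: U) (fun v => if v == b then [set b; a] else psi v).
Proof.
move=> i0U aU bU ab [pinj hpsi].
have bpsi v : v \in U :\ i0 -> b \notin psi v.
  by move=> /hpsi /and3P [_ _ /subsetP sU]; apply: contra bU => /sU.
have inU v : v \in (b |: U) :\ i0 -> v != b -> v \in U :\ i0.
  by rewrite !inE => /andP [-> /orP [-> | ->]] //; rewrite orbT.
split=> [x y xU yU /= | v vU].
  case: (eqVneq x b) => [-> | xb]; case: (eqVneq y b) => [-> | yb] //.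
  - by move=> ey; move: (bpsi y (inU y yU yb)); rewrite -ey !inE eqxx.
  - by move=> ex; move: (bpsi x (inU x xU xb)); rewrite ex !inE eqxx.
  - by apply: pinj; [apply: inU | apply: inU].
case: (eqVneq v b) => [-> | vb].
  have ba : [set b; a] \in G by rewrite setUC.
  by rewrite !inE eqxx ba subUset !sub1set !inE eqxx aU orbT.
have /and3P [-> -> sU] := hpsi v (inU v vU vb).
by rewrite (subset_trans sU) ?subsetUr.
Qed.

Lemma exists_parent_edges i0 : exists psi, parent_edges i0 setT psi.
Proof.
suff grow U psi : i0 \in U -> parent_edges i0 U psi -> exists psi, parent_edges i0 setT psi.
  by apply: (grow _ (fun=> set0) (set11 i0)); split=> [x y|v]; rewrite setDv inE.
have [n] := ubnP #|~: U|; elim: n U psi => // n IHn U psi ltU i0U hpsi.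
have [UT | /set0Pn [w]] := eqVneq (~: U) set0.
  by exists psi; rewrite -(setCK U) UT setC0 in hpsi.
rewrite inE => wU; have [a [b [aU bU ab]]] := exists_edge_out i0U wU.
apply: IHn (setU1r b i0U) (parent_edges_setU1 i0U aU bU ab hpsi).
by rewrite -ltnS (cardsC_setU1 bU).
Qed.

Hypothesis hacyc : ~ has_cycle G.

Lemma tree_nbr_in_connected_uniq U a w b : induced_connected G U -> a \in U -> w \in U ->
  b \notin U -> adj G b a -> adj G b w -> a = w.
Proof.
move=> hU aU wU bU ba bw; apply/eqP; apply: contraT => aw.
have /connectP [p pth wl] := hU a w aU wU.
move: wl; case: (shortenP pth) => p' pth' up' _ lp'; rewrite {w}lp' in wU aw bw.
case: hacyc; exists [:: b, a & p']; split.
- rewrite cons_uniq up' andbT inE negb_or.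
  by rewrite (contraNneq _ bU) => [|->] //; apply: contra bU => /(mem_induced_path pth').
- by case: p' {pth' up' wU bw} aw => //=; rewrite eqxx.
- rewrite [cycle _ _]/= rcons_path ba adjC bw andbT.
  by apply: sub_path pth' => x y /and3P [].
Qed.

Hypothesis hG : simple_graph G.

Lemma edges_out_setU1 U a b : induced_connected G U -> a \in U -> b \notin U ->
  adj G a b -> edges_out U \subset [set a; b] |: edges_out (b |: U).
Proof.
move=> hU aU bU ab; apply/subsetP => ed; rewrite !inE => /andP [edG /subsetPn [z zed zU]].
rewrite edG andTb; case: (boolP (ed \subset b |: U)) => [sed | _]; last by rewrite orbT.
have zb : z = b by move: (subsetP sed z zed); rewrite !inE (negbTE zU) orbF => /eqP.
have /cards2P [x [y [xy edxy]]] : #|ed| == 2 by rewrite (hG edG).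
have [w [wb edbw]] : exists w, w != b /\ ed = [set b; w].
  move: zed; rewrite zb edxy !inE => /orP [/eqP bx | /eqP b_y].
    by exists y; rewrite bx eq_sym.
  by exists x; rewrite b_y setUC.
have wU : w \in U.
  by move: (subsetP sed w); rewrite edbw !inE eqxx orbT (negbTE wb) => /(_ isT).
have aw : a = w.
  by apply: (tree_nbr_in_connected_uniq hU aU wU bU); [rewrite adjC | rewrite /adj -edbw].
by rewrite edbw -aw setUC eqxx.
Qed.

Lemma card_edges_out U : U != set0 -> induced_connected G U ->
  #|edges_out U| <= #|~: U|.
Proof.
have [n] := ubnP #|~: U|; elim: n U => // n IHn U ltU /set0Pn [u uU] hU.
have [UT | /set0Pn [w]] := eqVneq (~: U) set0.
  rewrite -(setCK U) UT setC0 (_ : edges_out _ = set0) ?cards0 //.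
  by apply/setP => ed; rewrite !inE subsetT andbF.
rewrite inE => wU; have [a [b [aU bU ab]]] := exists_edge_out uU wU.
have := subset_leq_card (edges_out_setU1 hU aU bU ab).
move/leq_trans/(_ (leq_card_setU _ _)); rewrite cards1 -(cardsC_setU1 bU).
have /IHn : #|~: (b |: U)| < n by rewrite -ltnS (cardsC_setU1 bU).
move=> /(_ _ (induced_connected_setU1 aU ab hU)).
by rewrite -card_gt0 cardsU1 bU => /(_ isT); lia.
Qed.

Lemma card_tree_edges (i0 : 'I_k) : #|G| < k.
Proof.
have -> : G = edges_out [set i0].
  apply/setP => ed; rewrite inE; case edG: (ed \in G) => //=.
  by apply/esym/negP => /subset_leq_card; rewrite (hG edG) cards1.
have conn1 : induced_connected G [set i0].
  by move=> u v /set1P -> /set1P ->; apply: connect0.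
have := card_edges_out _ conn1; rewrite -card_gt0 cards1 cardsC1 card_ord => /(_ isT).
by have := ltn_ord i0; lia.
Qed.

End Tree.

Section Presentation.
Variables (T : finType) (M : mat T) (r k : nat) (A : 'I_r -> {set T}) (e : T).
Variable G : {set {set 'I_k}}.
Hypotheses (hkr : k <= r) (hM : is_matroid M) (hpres : is_presentation (dual M) A).
Hypotheses (he : e \in ground M) (hk0 : 0 < k).
Hypothesis heA : forall i : 'I_r, (e \in A i) = (i < k).

Local Notation A' := (new_family M hkr A e (G := G)).
Local Notation I' := ({ed : {set 'I_k} | ed \in G} + {i : 'I_r | k <= i})%type.
Local Notation widen := (widen_ord hkr).
Implicit Types (C S X Y : {set T}).

Lemma presentation_sub i : A i \subset ground M.
Proof. by case: hpres => sA _; apply: sA. Qed.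

Lemma presentation_indep X : X \subset ground M ->
  indep (dual M) X <-> partial_transversal_in A setT X.
Proof. by case: hpres => _ h /h ->; apply: partial_transversal_inT. Qed.

Lemma e_in_head (i : 'I_k) : e \in A (widen i).
Proof. by rewrite heA /= ltn_ord. Qed.

Lemma exists_basis_notin : exists2 B, is_basis M B & e \notin B.
Proof.
pose i0 := Ordinal (leq_trans hk0 hkr).
have : indep (dual M) [set e].
  apply/presentation_indep; first by rewrite sub1set.
  apply: partial_transversal_inS (subsetT _) (partial_transversal_in1 (i := i0) _).
  by rewrite heA.
by case/andP => _ /existsP [B /andP [bB dB]]; exists B; rewrite // -disjoints1.
Qed.

Lemma new_family_sub t : A' t \subset ground M :\ e.
Proof.
case: t => [ed | [i ki]] /=; first by apply/subsetP => x; rewrite inE => /andP [].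
by rewrite subsetD1 presentation_sub heA -leqNgt.
Qed.

Lemma head_or_tail (v0 : 'I_k) (j : 'I_r) : j != widen v0 ->
  (exists2 v, j = widen v & v != v0) \/ k <= j.
Proof.
move=> jv0; case: (ltnP j k) => [jk | kj]; [left | by right].
exists (Ordinal jk); first exact: ord_inj.
by apply: contraNneq jv0 => <-; apply/eqP/val_inj.
Qed.

Section Relabel.
Variables (v0 : 'I_k) (psi : 'I_k -> {set 'I_k}).
Hypothesis hpsi : parent_edges G v0 setT psi.

(* Index [widen v] of a set containing [e] goes to the edge from [v] towards the
   root [v0], where [A (widen v0)] is the set matched to [e]; tail indices stay. *)
Definition relabel (j : 'I_r) : option I' :=
  if insub (val j) is Some v then omap inl (insub (psi v)) else omap inr (insub j).

Lemma mem_parent_edge v : v != v0 -> (v \in psi v) && (psi v \in G).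
Proof.
move=> vv0; have vT : v \in setT :\ v0 by rewrite !inE vv0.
by case/and3P: (hpsi.2 v vT) => -> ->.
Qed.

Lemma relabel_head v : v != v0 ->
  exists2 ed, relabel (widen v) = Some (inl ed) & val ed = psi v.
Proof.
move=> vv0; rewrite /relabel; case: insubP => [u _ uv | /negP []]; last exact: (ltn_ord v).
rewrite (val_inj uv); have /andP [_ psiG] := mem_parent_edge vv0.
by case: insubP => [ed _ edv | ]; [exists ed | rewrite psiG].
Qed.

Lemma relabel_tail (j : 'I_r) : k <= j -> exists2 l, relabel j = Some (inr l) & val l = j.
Proof.
move=> kj; rewrite /relabel; case: insubP => [u uk _ | _]; first by rewrite ltnNge kj in uk.
by case: insubP => [l _ lj | ]; [exists l | rewrite kj].
Qed.

Lemma relabel_inj : {in setT :\ widen v0 &, injective relabel}.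
Proof.
move=> j1 j2; rewrite !inE !andbT.
case/head_or_tail => [[v1 -> nv1] | k1]; case/head_or_tail => [[v2 -> nv2] | k2].
- have [ed1 -> e1] := relabel_head nv1; have [ed2 -> e2] := relabel_head nv2.
  case=> e12; congr widen_ord; apply: hpsi.1; rewrite ?inE ?nv1 ?nv2 //.
  by rewrite -e1 -e2 e12.
- by have [ed1 -> _] := relabel_head nv1; have [l2 -> _] := relabel_tail k2.
- by have [l1 -> _] := relabel_tail k1; have [ed2 -> _] := relabel_head nv2.
- have [l1 -> <-] := relabel_tail k1; have [l2 -> <-] := relabel_tail k2.
  by case=> ->.
Qed.

Lemma relabel_cover X (j : 'I_r) :
  e \notin X -> X \subset ground M -> j \in setT :\ widen v0 ->
  exists2 t, relabel j = Some t & X :&: A j \subset A' t.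
Proof.
move=> eX sXE; rewrite !inE andbT.
case/head_or_tail => [[v -> nv] | kj]; last first.
  by have [l -> lj] := relabel_tail kj; exists (inr l); rewrite //= lj subsetIr.
have [ed -> edv] := relabel_head nv; exists (inl ed) => //=.
apply/subsetP => x /setIP [xX xA]; have xe : x != e by apply: contraNneq eX => <-.
apply: mem_cl; last by rewrite !inE xe (subsetP sXE).
rewrite !inE xe; apply/bigcupP; exists v => //.
by rewrite edv; case/andP: (mem_parent_edge nv).
Qed.

End Relabel.

Hypotheses (hG : simple_graph G) (hconn : induced_connected G setT).
Hypotheses (hacyc : ~ has_cycle G) (hGp : presenting M hkr A e G).

Lemma new_family_transversal X : X \subset ground M :\ e ->
  partial_transversal_in A setT (e |: X) -> partial_transversal A' X.
Proof.
move=> sX; have eX : e \notin X by apply/negP => /(subsetP sX); rewrite !inE eqxx.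
case/(partial_transversal_in_setU1 eX) => i0 eA ptX.
have i0k : i0 < k by rewrite -heA.
have [psi hpsi] := exists_parent_edges hconn (Ordinal i0k).
have i0E : i0 = widen (Ordinal i0k) by apply: val_inj.
rewrite {}i0E in ptX.
apply: partial_transversal_in_relabel (relabel_inj hpsi) _ ptX => j.
by apply: relabel_cover; rewrite // (subset_trans sX) ?subsetDl.
Qed.

Definition tail := [set l : 'I_r | k <= l].

Lemma card_nbhd_new_family Y (N0 : {set {set 'I_k}}) :
  (forall ed, ~~ [disjoint A' (inl ed) & Y] -> val ed \in N0) ->
  #|nbhd A' setT Y| <= #|N0| + #|nbhd A tail Y|.
Proof.
move=> hN0.
pose S1 := [set ed | ~~ [disjoint A' (inl ed) & Y]].
pose S2 := [set l | ~~ [disjoint A' (inr l) & Y]].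
have sN : nbhd A' setT Y \subset (inl @: S1) :|: (inr @: S2).
  apply/subsetP => -[ed | l]; rewrite !inE => nd; apply/orP; [left | right];
    by apply: imset_f; rewrite inE.
apply: leq_trans (subset_leq_card sN) _; apply: leq_trans (leq_card_setU _ _) _.
rewrite (card_imset _ inl_inj) (card_imset _ inr_inj).
apply: leq_add; rewrite -(card_imset _ val_inj); apply: subset_leq_card.
  by apply/subsetP => x /imsetP [ed + ->]; rewrite inE => /hN0.
by apply/subsetP => x /imsetP [l + ->]; rewrite !inE (valP l).
Qed.

Lemma card_nbhd_head_tail Y (K0 : {set 'I_k}) :
  (forall i, i \in K0 -> ~~ [disjoint A (widen i) & Y]) ->
  #|K0| + #|nbhd A tail Y| <= #|nbhd A setT Y|.
Proof.
move=> hK0; have winj : injective widen by move=> a b /(congr1 val) /= /ord_inj.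
rewrite -(card_imset _ winj).
have dKT : [disjoint widen @: K0 & nbhd A tail Y].
  apply/disjointP => _ /imsetP [i _ ->]; rewrite !inE negb_and -ltnNge.
  by apply/orP; left; exact: (ltn_ord i).
case: (leq_card_setU (widen @: K0) (nbhd A tail Y)) => _; rewrite dKT => /eqP <-.
apply/subset_leq_card/subsetP => l.
rewrite inE => /orP [/imsetP [i iK ->] | ]; first by rewrite !inE hK0.
by rewrite !inE => /andP [_ ->].
Qed.

Lemma cl_disjoint_minimal_non_transversal C S : C \subset ground M ->
  ~ partial_transversal_in A setT C ->
  (forall x, x \in C -> partial_transversal_in A setT (C :\ x)) ->
  [disjoint S & C] -> [disjoint cl M S & C].
Proof.
move=> sCE nC hCx; apply: (cl_disjoint_cocircuit hM) => [x xC | B bB].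
  have : indep (dual M) (C :\ x).
    by apply/presentation_indep; [rewrite (subset_trans _ sCE) ?subsetDl | apply: hCx].
  by case/andP => _ /existsP [B /andP [bB dB]]; exists B.
apply/negP => dCB; apply: nC; apply/presentation_indep => //.
by rewrite /dual /= sCE; apply/existsP; exists B; rewrite bB.
Qed.

Definition head_disjoint C := [set i : 'I_k | [disjoint A (widen i) & C]].

Section Cocircuit.
Variables (X C : {set T}).
Hypotheses (hX : partial_transversal_in A' setT X) (sCX : C \subset e |: X).
Hypothesis hCcl : forall S, [disjoint S & C] -> [disjoint cl M S & C].

Lemma hall_ineq_mem_e : e \in C -> #|C| <= #|nbhd A setT C|.
Proof.
move=> eC; have sCX' : C :\ e \subset X.
  by apply/subsetP => x /setD1P [xe /(subsetP sCX)]; rewrite !inE (negbTE xe).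
have := hall_necessary hX sCX'.
have := card_nbhd_new_family (N0 := G) (Y := C :\ e) (fun ed _ => valP ed).
have := subset_leq_card (nbhdS A tail (subsetDl C [set e])).
have head_meet i : ~~ [disjoint A (widen i) & C].
  by apply/disjointPn; exists e; rewrite ?e_in_head.
have := card_nbhd_head_tail (K0 := setT) (fun i _ => head_meet i).
have := card_tree_edges hconn hacyc hG (Ordinal hk0).
by rewrite cardsT card_ord (cardsD1 e C) eC; lia.
Qed.

Lemma new_family_disjoint (ed : {ed | ed \in G}) :
  val ed \subset head_disjoint C -> [disjoint A' (inl ed) & C].
Proof.
move=> sU; rewrite /= cl_delete ?setD11 //; apply: disjointWl (subsetDl _ _) _.
apply: hCcl; apply: disjointWl (subsetDl _ _) _; rewrite disjoint_sym.
by apply/bigcup_disjointP => i /(subsetP sU); rewrite inE disjoint_sym.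
Qed.

Lemma induced_connected_head_disjoint : induced_connected G (head_disjoint C).
Proof.
move=> u v uU vU; have [-> | uv] := eqVneq u v; first exact: connect0.
set W := Ae hkr A e (cl M (A (widen u) :|: A (widen v))).
have sWU : W \subset head_disjoint C.
  apply/subsetP => i; rewrite !inE => /andP [sA _]; apply: disjointWl sA _.
  by apply: hCcl; move: uU vU; rewrite !inE !disjoints_subset subUset => -> ->.
have inW w : w \in [set u; v] -> w \in W.
  move=> uvw; rewrite inE e_in_head andbT; apply/subsetP => y yA.
  apply: mem_cl; last exact: subsetP (presentation_sub _) y yA.
  by case/set2P: uvw yA => -> yA; rewrite inE yA ?orbT.
apply: connect_sub (hGp uv (inW u (set21 u v)) (inW v (set22 u v))).
move=> a b /and3P [ab aW bW]; apply: connect1.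
by rewrite /= ab (subsetP sWU a aW) (subsetP sWU b bW).
Qed.

Lemma hall_ineq_cocircuit_notin_e : e \notin C -> #|C| <= #|nbhd A setT C|.
Proof.
move=> eC; set U := head_disjoint C.
have sCX' : C \subset X.
  apply/subsetP => x xC; move: (subsetP sCX x xC); rewrite !inE.
  by case: eqP => // xe; rewrite -xe xC in eC.
have hN0 ed : ~~ [disjoint A' (inl ed) & C] -> val ed \in edges_out G U.
  by rewrite inE (valP ed) andTb; apply: contra; apply: new_family_disjoint.
have card_out : #|edges_out G U| <= #|~: U|.
  have [U0 | nU] := eqVneq U set0; last first.
    exact: (card_edges_out hconn hacyc hG nU induced_connected_head_disjoint).
  rewrite U0 setC0 cardsT card_ord.
  apply: leq_trans (ltnW (card_tree_edges hconn hacyc hG (Ordinal hk0))).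
  by apply/subset_leq_card/subsetP => ed; rewrite inE => /andP [].
have head_meet i : i \in ~: U -> ~~ [disjoint A (widen i) & C] by rewrite !inE.
apply: leq_trans (hall_necessary hX sCX') _.
apply: leq_trans (card_nbhd_new_family hN0) _.
by apply: leq_trans (card_nbhd_head_tail head_meet); rewrite leq_add2r.
Qed.

End Cocircuit.

Lemma transversal_of_new_family X : X \subset ground M :\ e ->
  partial_transversal A' X -> partial_transversal_in A setT (e |: X).
Proof.
move=> sX /partial_transversal_inT hX; apply/hallP; apply: contraT.
case/minimal_hall_violator => C sCX [ltC nC hCx].
have sCE : C \subset ground M.
  by apply: subset_trans sCX _; rewrite subUset sub1set he (subset_trans sX) ?subsetDl.
have hCcl S : [disjoint S & C] -> [disjoint cl M S & C].
  exact: cl_disjoint_minimal_non_transversal.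
have : #|C| <= #|nbhd A setT C|.
  case: (boolP (e \in C)); first exact: hall_ineq_mem_e hX sCX.
  exact: hall_ineq_cocircuit_notin_e hX sCX hCcl.
by rewrite leqNgt ltC.
Qed.

End Presentation.

Theorem lemma3p4 (T : finType) (M : mat T) (r k : nat) (A : 'I_r -> {set T}) (e : T)
  (hM : is_matroid M)
  (hr : r = rank (dual M) (ground M))
  (hpres : is_presentation (dual M) A)
  (hmax : forall i, is_cyclic_flat M (A i))
  (he : e \in ground M)
  (hk0 : 0 < k) (hkr : k <= r)
  (heA : forall i : 'I_r, (e \in A i) = (i < k))
  (G : {set {set 'I_k}})
  (hG : simple_graph G)
  (hGmin : minimal_presenting M hkr A e G)
  (htree : is_tree G) :
  is_presentation (dual (delete M e)) (@new_family T M r k hkr A e G).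
Proof.
case: htree => hconn hacyc; case: hGmin => hGp _.
split=> [t | X sX]; first exact: new_family_sub hkr hpres heA t.
have hcoloop := exists_basis_notin hkr hpres he hk0 heA.
have seX : e |: X \subset ground M.
  by rewrite subUset sub1set he (subset_trans sX) ?subsetDl.
rewrite (dual_delete hM hcoloop he sX); apply: iff_trans (presentation_indep hpres seX) _.
split; first exact: new_family_transversal hkr heA hconn X sX.
exact: transversal_of_new_family hM hpres he hk0 heA hG hconn hacyc hGp X sX.
Qed.
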